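(* Let $w>1$ and $W=\begin{bmatrix}1&w\\0&1\end{bmatrix}$, and suppose the first token is fixed at $(0,1)$. Define the second-token dynamics on $\mathbb{S}^1$ by $$x^{(t+1)}=\frac{\tfrac12(0,1)W+\tfrac12 x^{(t)}W}{\big\|\tfrac12(0,1)W+\tfrac12 x^{(t)}W\big\|_2}.$$ Then the arc $\{x\in\mathbb{S}^1: x_1\le -1/w\}$ is invariant, and if $x^{(0)}\in\mathbb{S}^1$ satisfies $x^{(0)}_1<-1/w$, then $x^{(t)}\to B=\big(-\tfrac1w,-\sqrt{1-\tfrac1{w^2}}\big)$ as $t\to\infty$. In particular, for such initial data the two tokens $(0,1)$ and $B$ are linearly independent in the limit. (This is the LayerNorm self-attention dynamics with $N=d=2$, causal mask, $W_Q=W_K=0$, so that the attention matrix is $\begin{bmatrix}1&0\\1/2&1/2\end{bmatrix}$, and $W_V=W$.)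
   Context: $\mathbb{S}^1$ is the unit circle in $\mathbb{R}^2$; vectors are row vectors multiplied on the right by $W$. *)

From HB Require Import structures.
From mathcomp Require Import all_boot all_order all_algebra.
From mathcomp Require Import all_classical all_reals all_analysis.
Set Implicit Arguments. Unset Strict Implicit. Unset Printing Implicit Defensive.
Import Order.TTheory GRing.Theory Num.Theory.
Local Open Scope ring_scope.

Section Defs.
Variable R : realType.

Definition Wmat (w : R) : 'M[R]_2 :=
  \matrix_(i < 2, j < 2)
    (if i == j then 1 else if (i == 0) && (j == 1) then w else 0).

Definition tok1 : 'rV[R]_2 := \row_(j < 2) (if j == 1 then 1 else 0).

Definition norm2 (v : 'rV[R]_2) : R := Num.sqrt (\sum_(i < 2) (v 0 i) ^+ 2).

Definition step (w : R) (x : 'rV[R]_2) : 'rV[R]_2 :=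
  let y := 2^-1 *: (tok1 *m Wmat w) + 2^-1 *: (x *m Wmat w) in
  (norm2 y)^-1 *: y.

Definition traj (w : R) (x0 : 'rV[R]_2) (t : nat) : 'rV[R]_2 := iter t (step w) x0.

Definition Bpt (w : R) : 'rV[R]_2 :=
  \row_(j < 2) (if j == 0 then - (1 / w) else - Num.sqrt (1 - 1 / w ^+ 2)).

End Defs.

From HB Require Import structures.
From mathcomp Require Import all_boot all_order all_algebra.
From mathcomp Require Import all_classical all_reals all_analysis.
From mathcomp Require Import ring lra.
Import Order.TTheory GRing.Theory Num.Theory.
Import numFieldNormedType.Exports.
Local Open Scope classical_set_scope.
Local Open Scope ring_scope.

(* Write x = (a, b) on the unit circle. One step sends x to the normalisation of
   (a / 2, (w a + b + 1) / 2), and on the circle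
     (w a)^2 - a^2 - (w a + b + 1)^2 = 2 (1 + b) (- w a - 1),
   which is nonnegative on the arc w a <= -1: the normalising factor is at most
   - w a / 2, so the arc is invariant. On the open arc the cross product of x with
   its image is a (w a + 1) / (2 n) > 0, so the height b strictly decreases. Being
   monotone and bounded, b converges, hence so does a = - sqrt (1 - b^2); as each
   iterate is collinear with (a, w a + b + 1), the limit (A, L) satisfies
   A (w A + 1) = 0, which forces A = - 1 / w and L = - sqrt (1 - 1 / w^2). *)

Section Norm2.
Context {R : realType}.
Implicit Types (x y : 'rV[R]_2) (k : R).

Lemma norm2E x : norm2 x = Num.sqrt (x 0 0 ^+ 2 + x 0 1 ^+ 2).
Proof.
rewrite /norm2 !big_ord_recr big_ord0 /= add0r.
by congr (Num.sqrt (x 0 _ ^+ 2 + x 0 _ ^+ 2)); apply: val_inj.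
Qed.

Lemma norm2_eq1 x : norm2 x = 1 -> x 0 0 ^+ 2 + x 0 1 ^+ 2 = 1.
Proof.
rewrite norm2E => /(congr1 (fun r => r ^+ 2)).
by rewrite sqr_sqrtr ?expr1n // addr_ge0 ?sqr_ge0.
Qed.

Lemma norm2Z k y : norm2 (k *: y) = `|k| * norm2 y.
Proof.
by rewrite !norm2E !mxE !exprMn -mulrDr sqrtrM ?sqr_ge0 // sqrtr_sqr.
Qed.

Lemma norm2_ge0 y : 0 <= norm2 y.
Proof. exact: sqrtr_ge0. Qed.

Lemma norm2_gt0 y : y 0 0 != 0 -> 0 < norm2 y.
Proof.
move=> y0; rewrite norm2E sqrtr_gt0 ltr_pwDl ?sqr_ge0 //.
by rewrite exprn_even_gt0.
Qed.

Lemma norm2_normalize y : 0 < norm2 y -> norm2 ((norm2 y)^-1 *: y) = 1.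
Proof. by move=> y_gt0; rewrite norm2Z gtr0_norm ?invr_gt0 // mulVf ?gt_eqF. Qed.

Lemma circle_snd_ge x : x 0 0 ^+ 2 + x 0 1 ^+ 2 = 1 -> -1 <= x 0 1.
Proof. by nra. Qed.

Lemma circle_snd_gt x : x 0 0 ^+ 2 + x 0 1 ^+ 2 = 1 -> x 0 0 < 0 -> -1 < x 0 1.
Proof. by nra. Qed.

End Norm2.

Lemma circle_cross_lt {R : realFieldType} {a b p q : R} :
  a ^+ 2 + b ^+ 2 = 1 -> p ^+ 2 + q ^+ 2 = 1 -> a + p < 0 ->
  0 < a * q - b * p -> q < b.
Proof.
move=> ab1 pq1 ap_lt0 cross_gt0.
have E : (q - b) * ((a + p) ^+ 2 + (b + q) ^+ 2) = 2 * (a * q - b * p) * (a + p).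
  apply/eqP; rewrite -subr_eq0; apply/eqP.
  have -> : (q - b) * ((a + p) ^+ 2 + (b + q) ^+ 2) - 2 * (a * q - b * p) * (a + p)
      = (q + b) * ((p ^+ 2 + q ^+ 2) - (a ^+ 2 + b ^+ 2)) by ring.
  by rewrite ab1 pq1 subrr mulr0.
have S_gt0 : 0 < (a + p) ^+ 2 + (b + q) ^+ 2.
  have := sqr_ge0 (b + q); have : 0 < (a + p) ^+ 2 by rewrite exprn_even_gt0 //= lt_eqF.
  lra.
have : (q - b) * ((a + p) ^+ 2 + (b + q) ^+ 2) < 0.
  by rewrite E nmulr_llt0 // mulr_gt0.
by rewrite pmulr_llt0 // subr_lt0.
Qed.

Lemma arc_gap {R : realFieldType} (w : R) {a b : R} : a ^+ 2 + b ^+ 2 = 1 ->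
  (w * a) ^+ 2 - (a ^+ 2 + (w * a + b + 1) ^+ 2) = 2 * (1 + b) * (- (w * a) - 1).
Proof. by move=> ab1; rewrite (_ : a ^+ 2 = 1 - b ^+ 2); [ring | lra]. Qed.

Lemma arc_fixed_point {R : realFieldType} (w A L : R) : 0 < w -> w * A <= -1 ->
  A * (w * A + L + 1) = L * A -> A = - (1 / w).
Proof.
move=> w_gt0 wA_le /eqP; rewrite -subr_eq0 (_ : _ - _ = A * (w * A + 1)); last by ring.
have A_neq0 : A != 0 by apply/eqP => A0; move: wA_le; rewrite A0 mulr0; lra.
rewrite mulf_eq0 (negPf A_neq0) /= => /eqP wA1.
by rewrite -mulNr -(mulKf (lt0r_neq0 w_gt0) A) mulrC; congr (_ / _); lra.
Qed.

Lemma ler_Nrecip {R : realFieldType} (w a : R) : 0 < w ->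
  (a <= - (1 / w)) = (w * a <= -1).
Proof. by move=> w_gt0; rewrite -mulNr ler_pdivlMr // mulrC. Qed.

Lemma ltr_Nrecip {R : realFieldType} (w a : R) : 0 < w ->
  (a < - (1 / w)) = (w * a < -1).
Proof. by move=> w_gt0; rewrite -mulNr ltr_pdivlMr // mulrC. Qed.

Section Step.
Context {R : realType} (w : R).
Implicit Types x : 'rV[R]_2.

Definition attn x : 'rV[R]_2 :=
  2^-1 *: (tok1 R *m Wmat w) + 2^-1 *: (x *m Wmat w).

Lemma attnE x j :
  attn x 0 j = if j == 0 then x 0 0 / 2 else (w * x 0 0 + x 0 1 + 1) / 2.
Proof.
rewrite !mxE !big_ord_recr /= !big_ord0 !mxE /=.
have -> : (widen_ord (leqnSn 1) ord_max : 'I_2) = 0 by apply: val_inj.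
have -> : (ord_max : 'I_2) = 1 by apply: val_inj.
by case: j => [[|[|j]] hj] //=; ring.
Qed.

Lemma stepE x j : step w x 0 j = attn x 0 j / norm2 (attn x).
Proof. by rewrite mxE mulrC. Qed.

Lemma norm2_attn x :
  norm2 (attn x) = Num.sqrt ((x 0 0 / 2) ^+ 2 + ((w * x 0 0 + x 0 1 + 1) / 2) ^+ 2).
Proof. by rewrite norm2E !attnE. Qed.

Lemma norm2_attn_gt0 x : x 0 0 != 0 -> 0 < norm2 (attn x).
Proof.
by move=> x0; apply: norm2_gt0; rewrite attnE mulf_neq0 ?invr_eq0 ?pnatr_eq0.
Qed.

Lemma norm2_step x : x 0 0 != 0 -> norm2 (step w x) = 1.
Proof. by move=> x0; apply/norm2_normalize/norm2_attn_gt0. Qed.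

Lemma step_collinear x :
  step w x 0 0 * (w * x 0 0 + x 0 1 + 1) = step w x 0 1 * x 0 0.
Proof. by rewrite !stepE !attnE /=; ring. Qed.

Lemma arc_fst_lt0 x : 0 < w -> w * x 0 0 <= -1 -> x 0 0 < 0.
Proof. by move=> w_gt0 ?; rewrite -(pmulr_rlt0 _ w_gt0); lra. Qed.

Lemma norm2_attn_sqr x : x 0 0 ^+ 2 + x 0 1 ^+ 2 = 1 ->
  norm2 (attn x) ^+ 2 = (w * x 0 0 / 2) ^+ 2 - (1 + x 0 1) * (- (w * x 0 0) - 1) / 2.
Proof.
move=> x_circle; rewrite norm2_attn sqr_sqrtr ?addr_ge0 ?sqr_ge0 //.
by have := arc_gap w x_circle; lra.
Qed.

Lemma norm2_attn_le x : x 0 0 ^+ 2 + x 0 1 ^+ 2 = 1 -> w * x 0 0 <= -1 ->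
  norm2 (attn x) <= - (w * x 0 0) / 2.
Proof.
move=> x_circle x_arc; have := norm2_attn_sqr x x_circle.
have := circle_snd_ge x x_circle; have := norm2_ge0 (attn x).
by nra.
Qed.

Lemma norm2_attn_lt x : 0 < w -> x 0 0 ^+ 2 + x 0 1 ^+ 2 = 1 -> w * x 0 0 < -1 ->
  norm2 (attn x) < - (w * x 0 0) / 2.
Proof.
move=> w_gt0 x_circle x_arc; have := norm2_attn_sqr x x_circle.
have := circle_snd_gt x x_circle (arc_fst_lt0 x w_gt0 (ltW x_arc)).
have := norm2_ge0 (attn x).
by nra.
Qed.

Lemma step_fst_scale x : x 0 0 != 0 ->
  (w * step w x 0 0 + 1) * norm2 (attn x) = w * x 0 0 / 2 + norm2 (attn x).
Proof.
move=> x0; have n_neq0 := lt0r_neq0 (norm2_attn_gt0 x x0).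
by rewrite stepE attnE /=; field.
Qed.

Lemma step_arc_le x : 0 < w -> x 0 0 ^+ 2 + x 0 1 ^+ 2 = 1 -> w * x 0 0 <= -1 ->
  w * step w x 0 0 <= -1.
Proof.
move=> w_gt0 x_circle x_arc; have x0 := ltr0_neq0 (arc_fst_lt0 x w_gt0 x_arc).
have := step_fst_scale x x0; have := norm2_attn_le x x_circle x_arc.
have := norm2_attn_gt0 x x0; nra.
Qed.

Lemma step_arc_lt x : 0 < w -> x 0 0 ^+ 2 + x 0 1 ^+ 2 = 1 -> w * x 0 0 < -1 ->
  w * step w x 0 0 < -1.
Proof.
move=> w_gt0 x_circle x_arc; have x0 := ltr0_neq0 (arc_fst_lt0 x w_gt0 (ltW x_arc)).
have := step_fst_scale x x0; have := norm2_attn_lt x w_gt0 x_circle x_arc.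
have := norm2_attn_gt0 x x0; nra.
Qed.

Lemma step_snd_lt x : 0 < w -> x 0 0 ^+ 2 + x 0 1 ^+ 2 = 1 -> w * x 0 0 < -1 ->
  step w x 0 1 < x 0 1.
Proof.
move=> w_gt0 x_circle x_arc.
have a_lt0 := arc_fst_lt0 x w_gt0 (ltW x_arc).
have n_gt0 := norm2_attn_gt0 x (ltr0_neq0 a_lt0).
have p_lt0 : step w x 0 0 < 0.
  by rewrite -(pmulr_rlt0 _ w_gt0); have := step_arc_lt x w_gt0 x_circle x_arc; lra.
apply: (circle_cross_lt (p := step w x 0 0) x_circle).
- by apply/norm2_eq1/norm2_step; rewrite ltr0_neq0.
- by lra.
have -> : x 0 0 * step w x 0 1 - x 0 1 * step w x 0 0
    = x 0 0 * (w * x 0 0 + 1) / 2 / norm2 (attn x).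
  by rewrite !stepE !attnE /=; field; exact: lt0r_neq0.
by rewrite divr_gt0 // divr_gt0 // nmulr_rgt0 //; lra.
Qed.

End Step.

Lemma cvg_mx_entries {T : puniformType} {I : Type} (F : set_system I) {FF : Filter F}
    m n (u : I -> 'M[T]_(m, n)) (l : 'M[T]_(m, n)) :
  (forall i j, (fun t => u t i j) @ F --> l i j) -> u @ F --> l.
Proof.
move=> ul; apply/cvg_mx_entourageP => A entA.
apply: filter_forall => i; apply: filter_forall => j.
near=> t; rewrite inE; near: t; exact: (cvg_entourageP _ _).1 (ul i j) A entA.
Unshelve. all: by end_near.
Qed.

Lemma det_col_mx_tok1 {R : realType} (v : 'rV[R]_2) : \det (col_mx (tok1 R) v) = - v 0 0.
Proof.
have split0 : fintype.split (0 : 'I_(1 + 1)) = inl 0.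
  by rewrite -(unsplitK (inl (0 : 'I_1))); congr fintype.split; apply: val_inj.
have split1 : fintype.split (lift 0 0 : 'I_(1 + 1)) = inr 0.
  by rewrite -(unsplitK (inr (0 : 'I_1))); congr fintype.split; apply: val_inj.
rewrite (expand_det_row _ 0) !big_ord_recr big_ord0 /= /cofactor !det_mx11.
rewrite !mxE split0 split1 !mxE /= (_ : lift ord_max 0 = 0 :> 'I_2); last exact: val_inj.
by rewrite mul0r !add0r mul1r expr1 mulN1r.
Qed.

Section Trajectory.
Variables (R : realType) (w : R) (x0 : 'rV[R]_2).
Hypotheses (w_gt0 : 0 < w) (x0_circle : norm2 x0 = 1) (x0_arc : w * x0 0 0 < -1).

Let a t := traj w x0 t 0 0.
Let b t := traj w x0 t 0 1.

Lemma traj_open_arc t : norm2 (traj w x0 t) = 1 /\ w * a t < -1.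
Proof.
elim: t => [|t [x_circle x_arc]]; first by [].
have x_sqr := norm2_eq1 _ x_circle; rewrite /a /= -/(traj w x0 t).
split; first by apply: norm2_step; rewrite ltr0_neq0 // (arc_fst_lt0 _ _ w_gt0) ?ltW.
exact: step_arc_lt.
Qed.

Lemma traj_circle t : a t ^+ 2 + b t ^+ 2 = 1.
Proof. exact: norm2_eq1 (traj_open_arc t).1. Qed.

Lemma traj_snd_nonincreasing : nonincreasing_seq b.
Proof.
apply/nonincreasing_seqP => t; apply/ltW/step_snd_lt => //.
  exact: traj_circle.
exact: (traj_open_arc t).2.
Qed.

Lemma traj_snd_cvg : cvgn b.
Proof.
apply: nonincreasing_is_cvgn; first exact: traj_snd_nonincreasing.
by exists (-1) => _ [t _ <-]; apply: circle_snd_ge (traj_circle t).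
Qed.

Let L := limn b.
Let A := - Num.sqrt (1 - L ^+ 2).

Lemma traj_fstE t : a t = - Num.sqrt (1 - b t ^+ 2).
Proof.
have a_lt0 : a t < 0 by apply: arc_fst_lt0 w_gt0 (ltW (traj_open_arc t).2).
by rewrite -(traj_circle t) addrK sqrtr_sqr ltr0_norm ?opprK.
Qed.

Lemma traj_fst_cvg : a @ \oo --> A.
Proof.
rewrite (funext traj_fstE); apply: cvgN; apply: continuous_cvg.
  exact: sqrt_continuous.
apply: cvgB; first exact: cvg_cst.
rewrite expr2; under eq_fun do rewrite expr2; exact: cvgM traj_snd_cvg traj_snd_cvg.
Qed.

Lemma traj_limit_collinear : A * (w * A + L + 1) = L * A.
Proof.
have a_cvg := traj_fst_cvg; have b_cvg : b @ \oo --> L := traj_snd_cvg.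
have collinear t : a t.+1 * (w * a t + b t + 1) = b t.+1 * a t.
  exact: step_collinear.
have aS_cvg : (fun t => a t.+1) @ \oo --> A by rewrite cvg_shiftS.
have bS_cvg : (fun t => b t.+1) @ \oo --> L by rewrite cvg_shiftS.
have lhs : (fun t => a t.+1 * (w * a t + b t + 1)) @ \oo --> A * (w * A + L + 1).
  apply: cvgM => //; apply: cvgD; last exact: cvg_cst.
  by apply: cvgD => //; apply: cvgM => //; exact: cvg_cst.
have rhs : (fun t => b t.+1 * a t) @ \oo --> L * A by exact: cvgM.
rewrite (funext collinear) in lhs.
exact: (cvg_unique (@Rhausdorff R) lhs rhs).
Qed.

Lemma traj_limit_arc : w * A <= -1.
Proof.
have wa_cvg : (fun t => w * a t) @ \oo --> w * A.
  by apply: cvgM; [exact: cvg_cst | exact: traj_fst_cvg].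
apply: (ler_cvg_to wa_cvg (cvg_cst _)); apply: nearW => t.
exact: ltW (traj_open_arc t).2.
Qed.

Lemma traj_fst_limit : A = - (1 / w).
Proof. exact: arc_fixed_point w_gt0 traj_limit_arc traj_limit_collinear. Qed.

Lemma traj_snd_limit : L = - Num.sqrt (1 - 1 / w ^+ 2).
Proof.
have A_eq := traj_fst_limit.
have L_le t : L <= b t := nonincreasing_cvgn_ge traj_snd_nonincreasing traj_snd_cvg t.
have L_ge : -1 <= L.
  apply: limr_ge; first exact: traj_snd_cvg.
  by apply: nearW => t; exact: circle_snd_ge (traj_circle t).
have b0_le1 : b 0 <= 1 by have := traj_circle 0; nra.
have L_sqr : L ^+ 2 = 1 - (1 / w) ^+ 2.
  have L_le1 := le_trans (L_le 0) b0_le1.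
  by rewrite -[(1 / w) ^+ 2]sqrrN -A_eq /A sqrrN sqr_sqrtr; [ring | nra].
have a0_lt : a 0 < - (1 / w) by rewrite ltr_Nrecip.
have L_lt0 : L < 0.
  have : (1 / w) ^+ 2 < a 0 ^+ 2.
    have : 0 < 1 / w by rewrite divr_gt0.
    nra.
  move=> a0_sqr; rewrite ltNge; apply/negP => L_ge0.
  have : L ^+ 2 <= b 0 ^+ 2 by rewrite !expr2 ler_pM // ?L_le // (le_trans L_ge0).
  by have := traj_circle 0; lra.
have -> : 1 / w ^+ 2 = (1 / w) ^+ 2 by rewrite expr_div_n expr1n.
by rewrite -L_sqr sqrtr_sqr ltr0_norm ?opprK.
Qed.

Lemma traj_cvg : traj w x0 t @[t --> \oo] --> Bpt w.
Proof.
apply: cvg_mx_entries => i j; rewrite ord1 mxE.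
case: j => [[|[|//]] j_lt].
- rewrite (_ : Ordinal j_lt = 0) /=; last exact: val_inj.
  by rewrite -traj_fst_limit; exact: traj_fst_cvg.
- rewrite (_ : Ordinal j_lt = 1) /=; last exact: val_inj.
  by rewrite -traj_snd_limit; exact: traj_snd_cvg.
Qed.

End Trajectory.

Theorem mainTheorem13 (R : realType) (w : R) (hw : 1 < w) :
  (forall x : 'rV[R]_2, norm2 x = 1 -> x 0 0 <= - (1 / w) ->
     norm2 (step w x) = 1 /\ (step w x) 0 0 <= - (1 / w)) /\
  (forall x0 : 'rV[R]_2, norm2 x0 = 1 -> x0 0 0 < - (1 / w) ->
     traj w x0 t @[t --> \oo] --> Bpt w) /\
  \det (col_mx (tok1 R) (Bpt w)) != 0.
Proof.
have w_gt0 : 0 < w by lra.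
split; [|split].
- move=> x x_circle; rewrite !ler_Nrecip // => x_arc.
  have x_sqr := norm2_eq1 x x_circle.
  split; last exact: step_arc_le.
  by apply: norm2_step; rewrite ltr0_neq0 // (arc_fst_lt0 _ _ w_gt0).
- by move=> x0 x0_circle; rewrite ltr_Nrecip //; exact: traj_cvg.
- by rewrite det_col_mx_tok1 !mxE /= opprK div1r invr_eq0 gt_eqF.
Qed.
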